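(* Consider a combinatorial auction on a finite item set $X$ using the VCG rules. Let $u_1,\dots,u_k$ be the (reported) valuations of the other bidders and let $u=u_1\vee\dots\vee u_k$ be their combined valuation; suppose $u$ is submodular. Let a player have true valuation $v$. Suppose that instead of bidding under a single identity the player places bids under two identities with valuations $v_1$ and $v_2$, receiving bundles $S_1,S_2$ and paying VCG payments $p_1,p_2$ in that auction. Then $v(S_1\cup S_2)-p_1-p_2$ is at most the utility the player obtains by bidding truthfully $v$ under a single identity; that is, the player cannot benefit from placing false-name bids.
   Context: A valuation on $X$ is a function $w:2^X\to\mathbb{R}_{\ge 0}$ with $w(\emptyset)=0$ and monotone under inclusion. For valuations $w_1,w_2$, $(w_1\vee w_2)(S)=\max_{T\subseteq S}(w_1(T)+w_2(S\setminus T))$; this is associative, and $w_1\vee\dots\vee w_k(S)$ is the maximum of $\sum_i w_i(T_i)$ over partitions of $S$ into $T_1,\dots,T_k$. A valuation $w$ is submodular if $w(A)+w(B)\ge w(A\cup B)+w(A\cap B)$ for all $A,B\subseteq X$. VCG rules: given reported valuations of all bidders, the items are allocated by an allocation (partition of $X$) maximizing the sum of reported valuations; a bidder $i$ receiving $S_i$ pays $\max\sum_{j\ne i}w_j(T_j)-\sum_{j\ne i}w_j(S_j)$, where the max is over allocations of $X$ among the bidders other than $i$ (equivalently, with an optimal allocation, $W_{-i}(X)-W_{-i}(X\setminus S_i)$ where $W_{-i}$ is the OR of the other bidders' valuations). A bidder's utility is his true value of the items received minus the payments made. *)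

From mathcomp Require Import all_boot all_order all_algebra.
Set Implicit Arguments. Unset Strict Implicit. Unset Printing Implicit Defensive.
Import Order.TTheory GRing.Theory Num.Theory.
Local Open Scope ring_scope.

Section Auction.
Variable R : realFieldType.
Variable X : finType.

Definition is_valuation (w : {set X} -> R) : Prop :=
  [/\ w set0 = 0, (forall S : {set X}, 0 <= w S) & (forall S T : {set X}, S \subset T -> w S <= w T)].

Definition submodular (w : {set X} -> R) : Prop :=
  forall A B : {set X}, w (A :|: B) + w (A :&: B) <= w A + w B.

(* OR of k valuations: max over partitions of S into T_1..T_k
   (a partition is encoded by a labelling P of the items). *)
Definition or_val (k : nat) (u : 'I_k -> {set X} -> R) (S : {set X}) : R :=
  \big[Num.max/0]_(P : {ffun X -> 'I_k})
     \sum_(i < k) u i [set x in S | P x == i].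

Definition alloc (I : finType) := {ffun X -> I}.

Definition bundle (I : finType) (a : alloc I) (i : I) : {set X} :=
  [set x | a x == i].

Definition welfare (I : finType) (w : I -> {set X} -> R) (a : alloc I) : R :=
  \sum_(i : I) w i (bundle a i).

Definition vcg_optimal (I : finType) (w : I -> {set X} -> R) (a : alloc I) : Prop :=
  forall b : alloc I, welfare w b <= welfare w a.

Definition vcg_payment (I : finType) (w : I -> {set X} -> R) (a : alloc I) (i : I) : R :=
  \big[Num.max/0]_(b : alloc I | [forall x, b x != i])
      (\sum_(j | j != i) w j (bundle b j))
  - \sum_(j | j != i) w j (bundle a j).

Definition truthful_profile (k : nat) (u : 'I_k -> {set X} -> R) (v : {set X} -> R)
  (i : option 'I_k) : {set X} -> R :=
  match i with Some j => u j | None => v end.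

Definition falsename_profile (k : nat) (u : 'I_k -> {set X} -> R)
  (v1 v2 : {set X} -> R) (i : ('I_k + bool)%type) : {set X} -> R :=
  match i with inl j => u j | inr false => v1 | inr true => v2 end.

End Auction.

(* Let U be the OR of the other bidders, S1 and S2 the bundles of the two
   identities, T = S1 :|: S2, and w <= U (~: T) the value of the other bidders
   in the false-name outcome.  Identity 1 pays at least U (~: S2) - w, since
   without it the other bidders could share ~: S2 optimally while identity 2
   keeps S2; symmetrically for identity 2.  As S1 and S2 are disjoint,
   submodularity gives U (~: S1) + U (~: S2) >= U setT + U (~: T), so
   p1 + p2 >= U setT - U (~: T).  Bidding truthfully, the player's utility is
   the optimal welfare minus the others' best value, i.e. at least
   v T + U (~: T) - U setT. *)

From mathcomp Require Import all_boot all_order all_algebra.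
From mathcomp Require Import lra.
Import Order.TTheory GRing.Theory Num.Theory.
Local Open Scope ring_scope.
Set Implicit Arguments. Unset Strict Implicit.

Lemma big_option (R : nmodType) (I : finType) (F : option I -> R) :
  \sum_i F i = F None + \sum_i F (Some i).
Proof.
rewrite ![index_enum _]unlock [@Finite.enum in LHS]unlock /=.
by rewrite big_cons big_map.
Qed.

Section SetFunctions.
Variables (R : realFieldType) (X : finType).

Lemma submodular_compl_disjoint (w : {set X} -> R) (A B : {set X}) :
  submodular w -> [disjoint A & B] ->
  w setT + w (~: (A :|: B)) <= w (~: A) + w (~: B).
Proof.
move=> subw disAB; have := subw (~: A) (~: B).
by rewrite -setCI -setCU (disjoint_setI0 disAB) setC0.
Qed.

Lemma disjoint_bundle (I : finType) (c : alloc X I) (i j : I) :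
  i != j -> [disjoint bundle c i & bundle c j].
Proof.
move=> neq_ij; rewrite -setI_eq0; apply/eqP/setP => x; rewrite !inE.
by apply/andP => -[/eqP -> /eqP eq_ij]; rewrite eq_ij eqxx in neq_ij.
Qed.

End SetFunctions.

Section OrValuation.
Variables (R : realFieldType) (X : finType) (k : nat).
Variables (u : 'I_k -> {set X} -> R) (hu : forall i, is_valuation (u i)).

Local Notation U := (or_val u).

Lemma or_val_ge0 (S : {set X}) : 0 <= U S.
Proof.
by rewrite /or_val; elim/big_rec: _ => // P y _ y0; rewrite le_max y0 orbT.
Qed.

Lemma le_or_val (S : {set X}) (P : {ffun X -> 'I_k}) :
  \sum_i u i [set x in S | P x == i] <= U S.
Proof. exact: le_bigmax. Qed.

Lemma sum_bundles_le_or_val (I : finType) (c : alloc X I) (f : 'I_k -> I)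
    (S : {set X}) :
  injective f -> (forall i, bundle c (f i) \subset S) ->
  \sum_i u i (bundle c (f i)) <= U S.
Proof.
move=> f_inj bundleS; have [i0 _ | k0] := pickP (@predT 'I_k); last first.
  by rewrite big1 ?or_val_ge0 // => i; have := k0 i.
pose P : {ffun X -> 'I_k} := [ffun x => odflt i0 [pick i | c x == f i]].
apply: le_trans (le_or_val S P); apply: ler_sum => i _.
have [_ _ u_mono] := hu i; apply: u_mono; apply/subsetP => x xi.
rewrite inE (subsetP (bundleS i) x xi) ffunE /=; rewrite inE in xi.
case: pickP => [j /eqP cj | /(_ i)]; last by rewrite xi.
by apply/eqP/f_inj; rewrite -cj; apply/eqP.
Qed.

Section Split.
Variables (I : finType) (f : 'I_k -> I) (j0 : I).
Hypotheses (f_inj : injective f) (f_neq_j0 : forall i, f i != j0).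

Definition split_alloc (S : {set X}) (P : {ffun X -> 'I_k}) : alloc X I :=
  [ffun x => if x \in S then j0 else f (P x)].

Lemma bundle_split_alloc_j0 (S : {set X}) P : bundle (split_alloc S P) j0 = S.
Proof.
apply/setP => x; rewrite inE ffunE.
by case: ifP; rewrite ?eqxx // (negbTE (f_neq_j0 _)).
Qed.

Lemma bundle_split_alloc (S : {set X}) P i :
  bundle (split_alloc S P) (f i) = [set x in ~: S | P x == i].
Proof.
apply/setP => x; rewrite !inE ffunE; case: ifP => _ /=.
  by rewrite eq_sym (negbTE (f_neq_j0 _)).
exact: inj_eq.
Qed.

Lemma or_val_split_le (w0 : {set X} -> R) (S : {set X}) (M : R) :
  is_valuation w0 ->
  (forall c : alloc X I, (forall x, c x = j0 \/ exists i, c x = f i) ->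
     w0 (bundle c j0) + \sum_i u i (bundle c (f i)) <= M) ->
  w0 S + U (~: S) <= M.
Proof.
move=> [_ _ w0_mono] leM; suff: U (~: S) <= M - w0 S by lra.
(* The seed 0 of the maximum defining [U] is beaten by giving all to [j0]. *)
apply/bigmax_leP; split.
  pose c0 : alloc X I := [ffun=> j0].
  have c0E x : c0 x = j0 := ffunE _ _.
  have := leM c0 (fun x => or_introl (c0E x)).
  have -> : bundle c0 j0 = setT by apply/setP => x; rewrite !inE c0E eqxx.
  have : w0 S <= w0 setT := w0_mono _ _ (subsetT S).
  have : 0 <= \sum_i u i (bundle c0 (f i)).
    by apply: sumr_ge0 => i _; have [_ ? _] := hu i.
  lra.
move=> P _.
have split_range x :
    split_alloc S P x = j0 \/ exists i, split_alloc S P x = f i.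
  by rewrite ffunE; case: ifP => _; [left | right; exists (P x)].
have := leM _ split_range.
rewrite bundle_split_alloc_j0; under eq_bigr do rewrite bundle_split_alloc.
lra.
Qed.

End Split.

Section FalseName.
Variables (v1 v2 : {set X} -> R).
Hypotheses (hv1 : is_valuation v1) (hv2 : is_valuation v2).

Local Notation fp := (falsename_profile u v1 v2).

Lemma falsename_others_sum (bb : bool) (c : alloc X ('I_k + bool)%type) :
  \sum_(j | j != inr bb) fp j (bundle c j)
  = fp (inr (~~ bb)) (bundle c (inr (~~ bb))) + \sum_i u i (bundle c (inl i)).
Proof.
rewrite big_sumType addrC; congr (_ + _).
by case: bb; rewrite big_mkcond big_bool /= ?addr0 ?add0r.
Qed.

Lemma others_value_le_or_val (a : alloc X ('I_k + bool)%type) :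
  \sum_i u i (bundle a (inl i))
  <= U (~: (bundle a (inr false) :|: bundle a (inr true))).
Proof.
apply: sum_bundles_le_or_val => [i j [] // | i].
by apply/subsetP => x; rewrite !inE => /eqP ->.
Qed.

Lemma vcg_payment_falsename_ge (a : alloc X ('I_k + bool)%type) (bb : bool) :
  U (~: bundle a (inr (~~ bb))) - \sum_i u i (bundle a (inl i))
  <= vcg_payment fp a (inr bb).
Proof.
rewrite /vcg_payment falsename_others_sum.
set S := bundle a (inr (~~ bb)); set M := \big[Num.max/0]_(c | _) _.
suff: fp (inr (~~ bb)) S + U (~: S) <= M by lra.
apply: (@or_val_split_le _ inl (inr (~~ bb))) => [i j [] | i | | c c_range] //.
  by case: (bb).
rewrite -falsename_others_sum; apply: le_bigmax_cond; apply/forallP => x.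
by case: (c_range x) => [-> | [i ->]]; case: (bb).
Qed.

End FalseName.

Section Truthful.
Variables (v : {set X} -> R) (hv : is_valuation v).

Local Notation tp := (truthful_profile u v).

Lemma welfare_truthful (c : alloc X (option 'I_k)) :
  welfare tp c = v (bundle c None) + \sum_i u i (bundle c (Some i)).
Proof. exact: big_option. Qed.

Lemma truthful_others_sum (c : alloc X (option 'I_k)) :
  \sum_(j | j != None) tp j (bundle c j) = \sum_i u i (bundle c (Some i)).
Proof.
by have := welfare_truthful c; rewrite /welfare (bigD1 None) //= => /addrI.
Qed.

Lemma vcg_payment_truthful_le (b : alloc X (option 'I_k)) :
  vcg_payment tp b None <= U setT - \sum_i u i (bundle b (Some i)).
Proof.
rewrite /vcg_payment truthful_others_sum lerD2r.
apply/bigmax_leP; split => [|c _]; first exact: or_val_ge0.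
by rewrite truthful_others_sum; apply: sum_bundles_le_or_val => // i j [].
Qed.

Lemma welfare_truthful_optimal_ge (b : alloc X (option 'I_k)) (T : {set X}) :
  vcg_optimal tp b -> v T + U (~: T) <= welfare tp b.
Proof.
move=> b_opt; apply: (@or_val_split_le _ Some None) => // [i j [] //|c _].
by rewrite -welfare_truthful.
Qed.

End Truthful.

End OrValuation.

Theorem theorem12 (R : realFieldType) (X : finType) (k : nat)
  (u : 'I_k -> {set X} -> R) (v v1 v2 : {set X} -> R)
  (hu : forall i, is_valuation (u i)) (hv : is_valuation v)
  (hv1 : is_valuation v1) (hv2 : is_valuation v2)
  (hsub : submodular (or_val u))
  (a : alloc X ('I_k + bool)%type)
  (ha : vcg_optimal (falsename_profile u v1 v2) a)
  (b : alloc X (option 'I_k))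
  (hb : vcg_optimal (truthful_profile u v) b) :
  v (bundle a (inr false) :|: bundle a (inr true))
    - vcg_payment (falsename_profile u v1 v2) a (inr false)
    - vcg_payment (falsename_profile u v1 v2) a (inr true)
  <= v (bundle b None) - vcg_payment (truthful_profile u v) b None.
Proof.
have p1 := vcg_payment_falsename_ge hu hv1 hv2 a false.
have p2 := vcg_payment_falsename_ge hu hv1 hv2 a true.
have others := others_value_le_or_val hu a.
have subm := submodular_compl_disjoint hsub
  (disjoint_bundle a (isT : inr false != inr true)).
have pt := vcg_payment_truthful_le hu v b.
have wt := welfare_truthful_optimal_ge hu hv
  (bundle a (inr false) :|: bundle a (inr true)) hb.
rewrite welfare_truthful /= in wt p1 p2.
lra.
Qed.
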